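(* Let $G=A*_C\varphi$ with $|A/C|\ge2$, $|A/\varphi(C)|\ge2$ and generating set $\{t\}\cup(A\setminus\{1\})$. Let $w=t^{n_1}a_1t^{n_2}a_2\cdots t^{n_I}a_I$ be the word (of length $\sum_i|n_i|+I$) with $a_i\in A\setminus\{1\}$ single letters and $n_i\in\mathbb{Z}\setminus\{0\}$. Suppose either Condition I: $n_1,n_3,n_5,\dots>0$, $n_2,n_4,\dots<0$, $a_1,a_3,a_5,\dots\notin C$, $a_2,a_4,\dots\notin\varphi(C)$; or Condition II: $n_1,n_3,\dots<0$, $n_2,n_4,\dots>0$, $a_1,a_3,\dots\notin\varphi(C)$, $a_2,a_4,\dots\notin C$. Then $w$ is a geodesic, i.e. its length equals the minimal length of a word representing $\bar w$.
   Context: $A$ is a group, $C\le A$, $\varphi:C\to A$ an injective homomorphism, $G=A*_C\varphi=\langle A,t\mid c=t^{-1}\varphi(c)t\ \forall c\in C\rangle$. Words are finite sequences of letters from $\{t,t^{-1}\}\cup(A\setminus\{1\})$, $t^{n}$ denoting $|n|$ consecutive letters $t^{\pm1}$; $\bar w$ is the element represented. *)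

(* HNN extension G = A *_C phi given by its standard monoid
   presentation on words over {t, t^-1} u A. *)
From Stdlib Require Import List ZArith Relations.
Import ListNotations.

Record Group := {
  gcar :> Type;
  gmul : gcar -> gcar -> gcar;
  gone : gcar;
  ginv : gcar -> gcar;
  gmulA : forall x y z, gmul x (gmul y z) = gmul (gmul x y) z;
  gmul1l : forall x, gmul gone x = x;
  gmul1r : forall x, gmul x gone = x;
  gmulVl : forall x, gmul (ginv x) x = gone;
  gmulVr : forall x, gmul x (ginv x) = gone
}.

Definition is_subgroup (A : Group) (C : A -> Prop) : Prop :=
  C (gone A) /\ (forall x y, C x -> C y -> C (gmul A x y)) /\
  (forall x, C x -> C (ginv A x)).

Definition inj_hom_on (A : Group) (C : A -> Prop) (phi : A -> A) : Prop :=
  (forall x y, C x -> C y -> phi (gmul A x y) = gmul A (phi x) (phi y)) /\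
  (forall x y, C x -> C y -> phi x = phi y -> x = y).

Inductive letter (A : Type) : Type :=
| Lt : letter A
| Ltinv : letter A
| La : A -> letter A.
Arguments Lt {A}. Arguments Ltinv {A}. Arguments La {A} _.

Definition word (A : Type) := list (letter A).

Definition valid_word (A : Group) (w : word A) : Prop :=
  forall a, In (La a) w -> a <> gone A.

Inductive hnn_rel (A : Group) (C : A -> Prop) (phi : A -> A) :
  word A -> word A -> Prop :=
| rel_ttinv : hnn_rel A C phi [Lt; Ltinv] []
| rel_tinvt : hnn_rel A C phi [Ltinv; Lt] []
| rel_mul : forall a b, gmul A a b <> gone A ->
    hnn_rel A C phi [La a; La b] [La (gmul A a b)]
| rel_mul1 : forall a b, gmul A a b = gone A ->
    hnn_rel A C phi [La a; La b] []
| rel_conj : forall c, C c ->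
    hnn_rel A C phi [La c] [Ltinv; La (phi c); Lt].

Inductive hnn_step (A : Group) (C : A -> Prop) (phi : A -> A) :
  word A -> word A -> Prop :=
| step_intro : forall p s l r, hnn_rel A C phi l r ->
    hnn_step A C phi (p ++ l ++ s) (p ++ r ++ s).

Definition hnn_equiv (A : Group) (C : A -> Prop) (phi : A -> A) :
  word A -> word A -> Prop :=
  clos_refl_sym_trans _ (hnn_step A C phi).

Definition tpow {A : Type} (n : Z) : word A :=
  if (0 <? n)%Z then repeat Lt (Z.to_nat n) else repeat Ltinv (Z.to_nat (- n)).

Definition build_word {A : Type} (l : list (Z * A)) : word A :=
  flat_map (fun p => tpow (fst p) ++ [La (snd p)]) l.

Definition geodesic (A : Group) (C : A -> Prop) (phi : A -> A) (w : word A) : Prop :=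
  forall v, valid_word A v -> hnn_equiv A C phi v w -> length w <= length v.

(* Condition I (0-based index k: k even <-> paper's index odd) *)
Definition condI (A : Group) (C : A -> Prop) (phi : A -> A) (l : list (Z * A)) : Prop :=
  forall k, k < length l ->
    let n := fst (nth k l (0%Z, gone A)) in
    let a := snd (nth k l (0%Z, gone A)) in
    if Nat.even k then (0 < n)%Z /\ ~ C a
    else (n < 0)%Z /\ ~ (exists c, C c /\ phi c = a).

Definition condII (A : Group) (C : A -> Prop) (phi : A -> A) (l : list (Z * A)) : Prop :=
  forall k, k < length l ->
    let n := fst (nth k l (0%Z, gone A)) in
    let a := snd (nth k l (0%Z, gone A)) in
    if Nat.even k then (n < 0)%Z /\ ~ (exists c, C c /\ phi c = a)
    else (0 < n)%Z /\ ~ C a.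

From Stdlib Require Import List ZArith Lia Bool.
From Stdlib Require Import ClassicalEpsilon FunctionalExtensionality PropExtensionality.
Import ListNotations.

(* Words act on pairs (g, [(b1, r1); ...; (bk, rk)]) encoding the Britton
   normal form g t^b1 r1 ... t^bk rk, where the r_i are fixed representatives
   of right cosets of the associated subgroups C and phi(C).  Letters act by
   left multiplication, absorbing t^b g t^-b when g lies in the associated
   subgroup; the defining relations act trivially, so words representing the
   same element of G reach the same normal form from (1, []).  The weight of a
   normal form counts the letters it forces: one per t-letter, one for each
   nontrivial representative sitting between t^b and t^-b or at the end, and
   one for a leading element that cannot be moved past the first t-letter.  A
   single letter raises the weight by at most one, so the weight bounds the
   length of every word for the element from below.  Under Condition I or II
   the word w never pinches, and the weight of its normal form is |w|. *)

Section GroupFacts.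
Context {G : Group}.
Local Infix "**" := (gmul G) (at level 40, left associativity).

Lemma ginv_unique (x y : G) : x ** y = gone G -> y = ginv G x.
Proof.
  intro Hxy. rewrite <- (gmul1l G y), <- (gmulVl G x), <- gmulA, Hxy, gmul1r.
  reflexivity.
Qed.

Lemma ginv_involutive (x : G) : ginv G (ginv G x) = x.
Proof. symmetry. apply ginv_unique, gmulVl. Qed.

Lemma ginv_mul (x y : G) : ginv G (x ** y) = ginv G y ** ginv G x.
Proof.
  symmetry. apply ginv_unique.
  rewrite gmulA, <- (gmulA G x y), gmulVr, gmul1r, gmulVr. reflexivity.
Qed.

Lemma ginv_one : ginv G (gone G) = gone G.
Proof. symmetry. apply ginv_unique, gmul1l. Qed.

Lemma gmul_idempotent (x : G) : x ** x = x -> x = gone G.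
Proof.
  intro Hxx. rewrite <- (gmulVl G x). rewrite <- Hxx at 3.
  rewrite gmulA, gmulVl, gmul1l. reflexivity.
Qed.

Lemma subgroup_cancel_l {P : G -> Prop} : is_subgroup G P ->
  forall x y, P x -> P (x ** y) -> P y.
Proof.
  intros [_ [Pmul Pinv]] x y Px Pxy.
  replace y with (ginv G x ** (x ** y)) by (rewrite gmulA, gmulVl, gmul1l; reflexivity).
  auto.
Qed.

Lemma subgroup_cancel_r {P : G -> Prop} : is_subgroup G P ->
  forall x y, P y -> P (x ** y) -> P x.
Proof.
  intros [_ [Pmul Pinv]] x y Py Pxy.
  replace x with ((x ** y) ** ginv G y) by (rewrite <- gmulA, gmulVr, gmul1r; reflexivity).
  auto.
Qed.

End GroupFacts.

Section HNN.
Variable A : Group.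
Variable C : A -> Prop.
Variable phi : A -> A.
Hypothesis HC : is_subgroup A C.
Hypothesis Hphi : inj_hom_on A C phi.

Local Infix "**" := (gmul A) (at level 40, left associativity).
Local Notation e := (gone A).
Local Notation inv := (ginv A).
Local Notation decide := excluded_middle_informative.

Lemma phi_one : phi e = e.
Proof.
  destruct HC as [C1 _]. apply gmul_idempotent.
  rewrite <- (proj1 Hphi) by exact C1. rewrite gmul1l. reflexivity.
Qed.

Lemma phi_ginv c : C c -> phi (inv c) = inv (phi c).
Proof.
  intro Hc. destruct HC as [_ [_ Cinv]]. apply ginv_unique.
  rewrite <- (proj1 Hphi) by auto. rewrite gmulVr. apply phi_one.
Qed.

Definition phi_image (y : A) : Prop := exists c, C c /\ phi c = y.

Lemma phi_image_subgroup : is_subgroup A phi_image.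
Proof.
  destruct HC as [C1 [Cmul Cinv]]. split; [|split].
  - exists e. split; [exact C1 | apply phi_one].
  - intros x y [c [Hc <-]] [d [Hd <-]]. exists (c ** d).
    split; [auto | apply (proj1 Hphi); auto].
  - intros x [c [Hc <-]]. exists (inv c). split; [auto | apply phi_ginv; auto].
Qed.

(* The sign [b] stands for the letter t^b, with [true] for t and [false] for
   t^-1.  [tconj b c] is t^b c t^-b, mapping [assoc b] onto [assoc (negb b)]:
   the relation c = t^-1 phi(c) t reads t c t^-1 = phi c. *)
Definition assoc (b : bool) : A -> Prop := if b then C else phi_image.

Lemma assoc_subgroup b : is_subgroup A (assoc b).
Proof. destruct b; [exact HC | exact phi_image_subgroup]. Qed.

Lemma assoc_one b : assoc b e.
Proof. apply (assoc_subgroup b). Qed.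

Lemma assoc_mul b x y : assoc b x -> assoc b y -> assoc b (x ** y).
Proof. apply (assoc_subgroup b). Qed.

Lemma assoc_ginv b x : assoc b x -> assoc b (inv x).
Proof. apply (assoc_subgroup b). Qed.

Definition phi_preim (y : A) : A := epsilon (inhabits e) (fun c => C c /\ phi c = y).

Lemma phi_preim_spec y : phi_image y -> C (phi_preim y) /\ phi (phi_preim y) = y.
Proof. apply (epsilon_spec (inhabits e) (fun c => C c /\ phi c = y)). Qed.

Lemma phi_preim_phi c : C c -> phi_preim (phi c) = c.
Proof.
  intro Hc. destruct (phi_preim_spec (phi c)) as [Hp Hpc]; [exists c; auto|].
  apply (proj2 Hphi); auto.
Qed.

Definition tconj (b : bool) : A -> A := if b then phi else phi_preim.

Lemma tconj_assoc b x : assoc b x -> assoc (negb b) (tconj b x).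
Proof.
  destruct b; intro Hx.
  - exists x. auto.
  - apply phi_preim_spec, Hx.
Qed.

Lemma tconj_mul b x y : assoc b x -> assoc b y -> tconj b (x ** y) = tconj b x ** tconj b y.
Proof.
  destruct b; simpl; intros Hx Hy.
  - apply (proj1 Hphi); auto.
  - destruct Hx as [c [Hc <-]], Hy as [d [Hd <-]].
    rewrite <- (proj1 Hphi) by auto.
    rewrite !phi_preim_phi by (auto; apply HC; auto). reflexivity.
Qed.

Lemma tconjK b x : assoc b x -> tconj (negb b) (tconj b x) = x.
Proof.
  destruct b; simpl; intro Hx.
  - apply phi_preim_phi, Hx.
  - apply phi_preim_spec, Hx.
Qed.

Lemma tconj_assoc_negb b x : assoc (negb b) x -> assoc b (tconj (negb b) x).
Proof. intro Hx. rewrite <- (negb_involutive b) at 1. apply tconj_assoc, Hx. Qed.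

Lemma tconjK_negb b x : assoc (negb b) x -> tconj b (tconj (negb b) x) = x.
Proof. intro Hx. rewrite <- (negb_involutive b) at 1. apply tconjK, Hx. Qed.

(* The representative of the right coset [assoc b] g; the coset [assoc b]
   itself is represented by 1. *)
Definition crep (b : bool) (g : A) : A :=
  if decide (assoc b g) then e else epsilon (inhabits e) (fun r => assoc b (g ** inv r)).

Lemma crep_spec b g : assoc b (g ** inv (crep b g)).
Proof.
  unfold crep. destruct (decide (assoc b g)) as [Hg|Hg].
  - rewrite ginv_one, gmul1r. exact Hg.
  - apply (epsilon_spec (inhabits e) (fun r => assoc b (g ** inv r))).
    exists g. rewrite gmulVr. apply assoc_one.
Qed.

Lemma crep_assoc b g : assoc b g -> crep b g = e.
Proof. intro Hg. unfold crep. destruct (decide (assoc b g)); tauto. Qed.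

Lemma assoc_of_crep b g : assoc b (crep b g) -> assoc b g.
Proof.
  intro Hr. apply (subgroup_cancel_r (assoc_subgroup b) g (inv (crep b g))).
  - apply assoc_ginv, Hr.
  - apply crep_spec.
Qed.

Lemma crep_coset b c g : assoc b c -> crep b (c ** g) = crep b g.
Proof.
  intro Hc.
  assert (Hcoset : forall x, assoc b (c ** x) <-> assoc b x).
  { split; [apply (subgroup_cancel_l (assoc_subgroup b)), Hc | apply assoc_mul, Hc]. }
  unfold crep.
  destruct (decide (assoc b (c ** g))) as [Hcg|Hcg], (decide (assoc b g)) as [Hg|Hg].
  - reflexivity.
  - exfalso. apply Hg, Hcoset, Hcg.
  - exfalso. apply Hcg, Hcoset, Hg.
  - f_equal. apply functional_extensionality. intro r.
    apply propositional_extensionality. rewrite <- gmulA. apply Hcoset.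
Qed.

Lemma crep_idem b g : crep b (crep b g) = crep b g.
Proof.
  set (r := crep b g).
  replace r with (inv (g ** inv r) ** g) at 1
    by (rewrite ginv_mul, ginv_involutive, <- gmulA, gmulVl, gmul1r; reflexivity).
  apply crep_coset, assoc_ginv, crep_spec.
Qed.

Local Notation spine := (list (bool * gcar A)).
Local Notation nform := (prod (gcar A) spine).

Definition nf_one : nform := (e, []).

Definition push (b : bool) (g : A) (L : spine) : nform :=
  (tconj b (g ** inv (crep b g)), (b, crep b g) :: L).

(* Pinch: when g lies in [assoc b] and the spine starts with t^-b, the
   product t^b g t^-b = tconj b g is absorbed into the leading element. *)
Definition act_t (b : bool) (x : nform) : nform :=
  let '(g, L) := x in
  match L with
  | (b', r) :: L' =>
      if Bool.eqb b' (negb b) then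
        if decide (assoc b g) then (tconj b g ** r, L') else push b g L
      else push b g L
  | [] => push b g L
  end.

Definition act_a (a : A) (x : nform) : nform := (a ** fst x, snd x).

Definition act_letter (l : letter A) : nform -> nform :=
  match l with Lt => act_t true | Ltinv => act_t false | La a => act_a a end.

Definition act (w : word A) (x : nform) : nform := fold_right act_letter x w.

Lemma act_app u v x : act (u ++ v) x = act u (act v x).
Proof. apply fold_right_app. Qed.

Definition no_pinch (b : bool) (g : A) (L : spine) : Prop :=
  forall r L', L = (negb b, r) :: L' -> ~ assoc b g.

Lemma act_t_spec b g L :
  (exists r L', L = (negb b, r) :: L' /\ assoc b g /\ act_t b (g, L) = (tconj b g ** r, L'))
  \/ (no_pinch b g L /\ act_t b (g, L) = push b g L).
Proof.
  destruct L as [|[b' r] L'].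
  - right. split; [intros ? ? H; discriminate | reflexivity].
  - simpl. destruct (Bool.eqb b' (negb b)) eqn:Eb.
    + apply Bool.eqb_prop in Eb. subst b'.
      destruct (decide (assoc b g)) as [Hg|Hg].
      * left. eauto.
      * right. split; [intros ? ? _; exact Hg | reflexivity].
    + right. split; [|reflexivity]. intros r' L'' Heq. injection Heq as -> _ _.
      rewrite Bool.eqb_reflx in Eb. discriminate.
Qed.

Fixpoint reduced (L : spine) : Prop :=
  match L with
  | [] => True
  | (b, r) :: L' => crep b r = r /\ no_pinch b r L' /\ reduced L'
  end.

Lemma reduced_push b g L : no_pinch b g L -> reduced L -> reduced (snd (push b g L)).
Proof.
  intros Hn HL. split; [apply crep_idem|]. split; [|exact HL].
  intros r L' HL' Hr. apply (Hn r L' HL'), assoc_of_crep, Hr.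
Qed.

Lemma reduced_act_t b x : reduced (snd x) -> reduced (snd (act_t b x)).
Proof.
  destruct x as [g L]. intro HL.
  destruct (act_t_spec b g L) as [[r [L' [-> [_ ->]]]] | [Hn ->]].
  - apply HL.
  - apply reduced_push; assumption.
Qed.

Lemma reduced_act w x : reduced (snd x) -> reduced (snd (act w x)).
Proof.
  induction w as [|[| |a] w IH]; intro Hx; simpl.
  - exact Hx.
  - apply reduced_act_t, IH, Hx.
  - apply reduced_act_t, IH, Hx.
  - apply IH, Hx.
Qed.

Lemma act_t_cancel b x : reduced (snd x) -> act_t b (act_t (negb b) x) = x.
Proof.
  destruct x as [g L]. intro HL.
  destruct (act_t_spec (negb b) g L) as [[r [L' [EL [Hg ->]]]] | [Hn ->]].
  - rewrite negb_involutive in EL. subst L. destruct HL as [Hr [Hnp _]].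
    set (m := tconj (negb b) g).
    assert (Hm : assoc b m) by (apply tconj_assoc_negb, Hg).
    destruct (act_t_spec b (m ** r) L') as [[r' [L'' [EL' [Hmr _]]]] | [_ ->]].
    + exfalso. apply (Hnp r' L'' EL').
      apply (subgroup_cancel_l (assoc_subgroup b) m r Hm Hmr).
    + unfold push. rewrite crep_coset, Hr by exact Hm.
      rewrite <- gmulA, gmulVr, gmul1r. unfold m. rewrite tconjK_negb by exact Hg. reflexivity.
  - unfold push. set (r := crep (negb b) g).
    assert (Hgr : assoc (negb b) (g ** inv r)) by apply crep_spec.
    destruct (act_t_spec b (tconj (negb b) (g ** inv r)) ((negb b, r) :: L))
      as [[r' [L' [EL [_ ->]]]] | [Hn' _]].
    + injection EL as -> ->.
      rewrite tconjK_negb, <- gmulA, gmulVl, gmul1r by exact Hgr. reflexivity.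
    + exfalso. apply (Hn' r L eq_refl), tconj_assoc_negb, Hgr.
Qed.

Lemma act_t_conj b c x : assoc b c ->
  act_t b (act_a c x) = act_a (tconj b c) (act_t b x).
Proof.
  destruct x as [g L]. intro Hc. change (act_a c (g, L)) with (c ** g, L).
  assert (Hcg : assoc b (c ** g) <-> assoc b g).
  { split; [apply (subgroup_cancel_l (assoc_subgroup b)), Hc | apply assoc_mul, Hc]. }
  destruct (act_t_spec b g L) as [[r [L' [EL [Hg ->]]]] | [Hn ->]];
  destruct (act_t_spec b (c ** g) L) as [[r' [L'' [EL' [Hcg' ->]]]] | [Hn' ->]].
  - rewrite EL in EL'. injection EL' as -> ->.
    unfold act_a. simpl. rewrite tconj_mul, gmulA by assumption. reflexivity.
  - exfalso. apply (Hn' r L' EL), Hcg, Hg.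
  - exfalso. apply (Hn r' L'' EL'), Hcg, Hcg'.
  - unfold push, act_a. simpl. rewrite crep_coset by exact Hc.
    rewrite <- gmulA, tconj_mul by (auto; apply crep_spec). reflexivity.
Qed.

Lemma act_rel u v x : hnn_rel A C phi u v -> reduced (snd x) -> act u x = act v x.
Proof.
  intros Huv Hx. destruct Huv as [| |a b _|a b Hab|c Hc]; simpl.
  - apply (act_t_cancel true x Hx).
  - apply (act_t_cancel false x Hx).
  - unfold act_a. simpl. rewrite gmulA. reflexivity.
  - unfold act_a. simpl. rewrite gmulA, Hab, gmul1l. destruct x. reflexivity.
  - change (act_a c x = act_t false (act_a (tconj true c) (act_t true x))).
    rewrite <- act_t_conj by exact Hc. symmetry. apply (act_t_cancel false), Hx.
Qed.

Lemma act_equiv u v x : hnn_equiv A C phi u v -> reduced (snd x) -> act u x = act v x.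
Proof.
  intro Huv. revert x.
  induction Huv as [u v [p s l r Hlr] | u | u v _ IH | u v w _ IH1 _ IH2]; intros x Hx.
  - rewrite !act_app. f_equal. apply act_rel; [exact Hlr | apply reduced_act, Hx].
  - reflexivity.
  - symmetry. auto.
  - rewrite IH1, IH2 by exact Hx. reflexivity.
Qed.

(* Between t^b and t^-b a reduced spine has a representative outside
   [assoc b], hence nontrivial: a sign change costs an extra A-letter. *)
Fixpoint spine_weight (L : spine) : nat :=
  match L with
  | [] => 0
  | [(_, r)] => if decide (r = e) then 1 else 2
  | (b, _) :: ((b', _) :: _) as L' => (if Bool.eqb b b' then 1 else 2) + spine_weight L'
  end.

Definition weight (x : nform) : nat :=
  match x with
  | (g, []) => if decide (g = e) then 0 else 1
  | (g, (b, r) :: L) => spine_weight ((b, r) :: L) + if decide (assoc (negb b) g) then 0 else 1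
  end.

Lemma weight_act_a a x : weight (act_a a x) <= S (weight x).
Proof.
  destruct x as [g [|[b r] L]]; simpl; repeat destruct decide; lia.
Qed.

Lemma weight_act_t b x : weight (act_t b x) <= S (weight x).
Proof.
  destruct x as [g L].
  destruct (act_t_spec b g L) as [[r [L' [-> [Hg ->]]]] | [Hn ->]].
  - destruct L' as [|[b' r'] L']; simpl; repeat destruct decide; lia.
  - unfold push. set (r := crep b g).
    assert (Hr : assoc (negb b) (tconj b (g ** inv r))) by apply tconj_assoc, crep_spec.
    destruct L as [|[b' r'] L']; simpl; destruct (decide (assoc (negb b) _)) as [_|]; try contradiction.
    + destruct (decide (g = e)) as [Hg|Hg], (decide (r = e)) as [Hr1|Hr1]; try lia.
      exfalso. apply Hr1, crep_assoc. rewrite Hg. apply assoc_one.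
    + destruct (Bool.eqb b b') eqn:Eb; [lia|].
      assert (b' = negb b) as -> by (destruct b, b'; simpl in *; congruence).
      rewrite negb_involutive.
      destruct (decide (assoc b g)) as [Hg|]; [exfalso; exact (Hn r' L' eq_refl Hg) | lia].
Qed.

Lemma weight_act_le_length v : weight (act v nf_one) <= length v.
Proof.
  induction v as [|l v IH]; simpl.
  - destruct decide; [lia | congruence].
  - apply (Nat.le_trans _ (S (weight (act v nf_one)))); [|lia].
    destruct l; [apply weight_act_t | apply weight_act_t | apply weight_act_a].
Qed.

Definition syllable_ok (s : bool) (p : Z * A) : Prop :=
  (if s then (0 < fst p)%Z else (fst p < 0)%Z) /\ ~ assoc s (snd p).

Fixpoint alternating (s : bool) (l : list (Z * A)) : Prop :=
  match l with
  | [] => True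
  | p :: l' => syllable_ok s p /\ alternating (negb s) l'
  end.

Lemma alternating_nth s l d :
  (forall k, k < length l ->
     syllable_ok (if Nat.even k then s else negb s) (nth k l d)) ->
  alternating s l.
Proof.
  revert s. induction l as [|p l IH]; intros s Hl; simpl; [exact I|].
  split.
  - apply (Hl 0). simpl. lia.
  - apply IH. intros k Hk. specialize (Hl (S k) ltac:(simpl; lia)).
    rewrite Nat.even_succ, <- Nat.negb_even in Hl.
    destruct (Nat.even k); rewrite ?negb_involutive in *; exact Hl.
Qed.

Lemma alternating_of_cond l :
  condI A C phi l \/ condII A C phi l -> exists s, alternating s l.
Proof.
  intros [H|H]; [exists true | exists false]; apply alternating_nth with (d := (0%Z, e));
    intros k Hk; specialize (H k Hk); cbv zeta in H; destruct (Nat.even k); exact H.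
Qed.

Definition tletter (s : bool) : letter A := if s then Lt else Ltinv.

Lemma tpow_syllable s p : syllable_ok s p ->
  exists k, @tpow (gcar A) (fst p) = repeat (tletter s) (S k).
Proof.
  destruct p as [n a]. unfold syllable_ok, tpow. cbn [fst]. intros [Hn _]. destruct s.
  - exists (Z.to_nat n - 1). rewrite (proj2 (Z.ltb_lt 0 n) Hn).
    replace (S (Z.to_nat n - 1)) with (Z.to_nat n) by lia. reflexivity.
  - exists (Z.to_nat (- n) - 1). rewrite (proj2 (Z.ltb_ge 0 n)) by lia.
    replace (S (Z.to_nat (- n) - 1)) with (Z.to_nat (- n)) by lia. reflexivity.
Qed.

Lemma act_letter_tletter s : act_letter (tletter s) = act_t s.
Proof. destruct s; reflexivity. Qed.

Lemma act_tpow s k g L : no_pinch s g L ->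
  exists g' M, act (repeat (tletter s) (S k)) (g, L) = (g', M ++ (s, crep s g) :: L)
    /\ Forall (fun p => fst p = s) M /\ length M = k /\ assoc (negb s) g'.
Proof.
  intro Hn. induction k as [|k IH].
  - exists (tconj s (g ** inv (crep s g))), []. simpl. rewrite act_letter_tletter.
    destruct (act_t_spec s g L) as [[r [L' [EL [Hg _]]]] | [_ ->]].
    + exfalso. exact (Hn r L' EL Hg).
    + split; [reflexivity|]. split; [constructor|].
      split; [reflexivity | apply tconj_assoc, crep_spec].
  - destruct IH as [g' [M [E [HM [HlenM Hg']]]]].
    change (act (repeat (tletter s) (S (S k))) (g, L))
      with (act_letter (tletter s) (act (repeat (tletter s) (S k)) (g, L))).
    rewrite E.
    rewrite act_letter_tletter.
    destruct (act_t_spec s g' (M ++ (s, crep s g) :: L)) as [[r [L' [EL _]]] | [_ ->]].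
    + exfalso. destruct M as [|[b' r'] M]; [|apply Forall_inv in HM; simpl in HM; subst b'];
        injection EL; intros; destruct s; discriminate.
    + exists (tconj s (g' ** inv (crep s g'))), ((s, crep s g') :: M).
      split; [reflexivity|]. split; [constructor; auto|].
      split; [simpl; lia | apply tconj_assoc, crep_spec].
Qed.

Lemma same_sign_app_head s (M : spine) r L : Forall (fun p => fst p = s) M ->
  exists r' K, M ++ (s, r) :: L = (s, r') :: K.
Proof.
  intro HM. destruct M as [|[b r'] M]; simpl; [eauto|].
  apply Forall_inv in HM. simpl in HM. subst b. eauto.
Qed.

Lemma spine_weight_same_sign s M r L : Forall (fun p => fst p = s) M ->
  spine_weight (M ++ (s, r) :: L) = length M + spine_weight ((s, r) :: L).
Proof.
  induction 1 as [|p M Hp HM IH]; [reflexivity|]. destruct p as [b r'].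
  simpl in Hp. subst b.
  destruct (same_sign_app_head s M r L HM) as [r'' [K EK]].
  simpl app. rewrite EK.
  change (spine_weight ((s, r') :: (s, r'') :: K))
    with ((if Bool.eqb s s then 1 else 2) + spine_weight ((s, r'') :: K)).
  rewrite Bool.eqb_reflx, <- EK, IH. reflexivity.
Qed.

Lemma act_alternating s l : alternating s l -> l <> [] ->
  exists g r K, act (build_word l) nf_one = (g, (s, r) :: K) /\ assoc (negb s) g /\
    length (build_word l) <= spine_weight ((s, r) :: K).
Proof.
  revert s. induction l as [|[n a] l IH]; intros s Halt Hne; [congruence|].
  destruct Halt as [Hna Hl].
  destruct (tpow_syllable s (n, a) Hna) as [k Hk]. simpl fst in Hk.
  destruct Hna as [_ Ha]. simpl snd in Ha.
  unfold build_word. simpl flat_map. fold (@build_word (gcar A) l).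
  rewrite <- app_assoc, !act_app, Hk, !length_app, repeat_length.
  (* The syllable t^n a is appended to a normal form whose first letter is t^-s. *)
  assert (Hstart : exists g0 L0, act (build_word l) nf_one = (g0, L0) /\
      no_pinch s (a ** g0) L0 /\ length (build_word l) + 1 + 1 <= spine_weight ((s, crep s (a ** g0)) :: L0)).
  { destruct l as [|p l'].
    - exists e, []. split; [reflexivity|]. split; [intros ? ? H; discriminate|].
      rewrite gmul1r. simpl. destruct decide as [Hr|]; [|lia].
      exfalso. apply Ha, assoc_of_crep. rewrite Hr. apply assoc_one.
    - destruct (IH (negb s) Hl ltac:(discriminate)) as [g0 [r0 [K [E [Hg0 Hlen]]]]].
      rewrite negb_involutive in Hg0.
      exists g0, ((negb s, r0) :: K). split; [exact E|]. split.
      + intros ? ? _ Hag0. apply Ha, (subgroup_cancel_r (assoc_subgroup s) a g0 Hg0 Hag0).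
      + simpl. destruct s; simpl in *; lia. }
  destruct Hstart as [g0 [L0 [E [Hn Hlen]]]].
  rewrite E. change (act [La a] (g0, L0)) with (a ** g0, L0).
  destruct (act_tpow s k (a ** g0) L0 Hn) as [g' [M [E' [HM [HlenM Hg']]]]].
  destruct (same_sign_app_head s M (crep s (a ** g0)) L0 HM) as [r [K EK]].
  exists g', r, K. rewrite E', EK. split; [reflexivity|]. split; [exact Hg'|].
  rewrite <- EK, spine_weight_same_sign by exact HM. simpl length. lia.
Qed.

Lemma alternating_length_le_weight s l : alternating s l ->
  length (build_word l) <= weight (act (build_word l) nf_one).
Proof.
  intro Hl. destruct l as [|p l']; [simpl; lia|].
  destruct (act_alternating s (p :: l') Hl ltac:(discriminate)) as [g [r [K [-> [Hg Hlen]]]]].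
  unfold weight. destruct decide; [lia | contradiction].
Qed.

End HNN.

Theorem lemma7p1 (A : Group) (C : A -> Prop) (phi : A -> A)
  (HC : is_subgroup A C) (Hphi : inj_hom_on A C phi)
  (HAC : exists a : A, ~ C a)
  (HAphiC : exists a : A, ~ (exists c, C c /\ phi c = a))
  (l : list (Z * A))
  (Hl : forall p, In p l -> fst p <> 0%Z /\ snd p <> gone A)
  (Hcond : condI A C phi l \/ condII A C phi l) :
  geodesic A C phi (build_word l).
Proof.
  intros v _ Hv.
  destruct (alternating_of_cond A C phi l Hcond) as [s Hs].
  apply (Nat.le_trans _ _ _ (alternating_length_le_weight A C phi HC Hphi s l Hs)).
  rewrite <- (act_equiv A C phi HC Hphi v (build_word l) (nf_one A) Hv I).
  exact (weight_act_le_length A C phi HC Hphi v).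
Qed.
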